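(* In the setting described in the context, suppose that $S$ is Hilbert–Schmidt with $\|S-\hat S\|_{B_2}\le\epsilon_S$, and that $\hat P=\sum_{i,j=1}^n\theta^P_{ij}\mathring\phi_{x_i}\times\mathring\phi_{x_j}$ has coefficient matrix $\Theta_P$ satisfying $\mathrm{diag}(G_{xx^+}^\top\Theta_PG_{xx^+}-G_{xx}^\top\Theta_PG_{xx}-G_{xu}^\top\Theta_SG_{xu})\le0$ entrywise. Let $\hat v(x)=\langle\mathring\phi_x,\hat P\mathring\phi_x\rangle$ and $w(x,u)=\hat v(f(x,u))-\hat v(x)-s(h(x,u),u)$. Then $$\frac{w(x_i,u_i)}{|(x_i,u_i)|^2}\le\epsilon_S\rho(0)\quad\text{for all }i\text{ with }|(x_i,u_i)|\ne0.$$
   Context: Setting: system $x^+=f(x,u)$, $y=h(x,u)$ on bounded Lipschitz regions $\mathbb{X}\subset\mathbb{R}^{d_x}$, $\mathbb{U}\subset\mathbb{R}^{d_u}$ containing $0$, $f(0,0)=0$, $h(0,0)=0$, $f\in\mathring{C}^s(\mathbb{X}\times\mathbb{U},\mathbb{X})=\{\sum_{k=1}^{d_x+d_u}e_kf_k:f_k\in H^s(\mathbb{X}\times\mathbb{U},\mathbb{X})\}$ ($e_k(z)=z_k$, $H^s$ Sobolev) with $s\in\mathbb{N}$, $s>(d_x+d_u)/2$, and $\inf_{x,u}\lvert\mathrm{D}_xf(x,u)\rvert>0$. Kernels: $\rho:\mathbb{R}_+\to\mathbb{R}_+$ with $c_1(1+|\xi|^2)^{-s}\le|\hat\rho(\xi)|\le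 c_2(1+|\xi|^2)^{-s}$; $\mathring\kappa(x,x')=(x^\top x')\rho(|x-x'|)$, $\mathring\varkappa((x,u),(x',u'))=(x^\top x'+u^\top u')\rho(|(x,u)-(x',u')|)$, with RKHSs $\mathcal{H}_{\mathring\kappa}(\mathbb{X})$, $\mathcal{H}_{\mathring\varkappa}(\mathbb{X}\times\mathbb{U})$ and canonical features $\mathring\phi_x=\mathring\kappa(x,\cdot)$, $\mathring\varphi_{(x,u)}=\mathring\varkappa((x,u),(\cdot,\cdot))$. $S$ is a self-adjoint operator on $\mathcal{H}_{\mathring\varkappa}(\mathbb{X}\times\mathbb{U})$ with $s(h(x,u),u)=\langle\mathring\varphi_{(x,u)},S\mathring\varphi_{(x,u)}\rangle$ for all $(x,u)$. Data: $\{(x_i,u_i,x_i^+)\}_{i=1}^n$ with $x_i^+=f(x_i,u_i)$; $\hat S=\sum_{i,j=1}^n\theta^S_{ij}\mathring\varphi_{(x_i,u_i)}\times\mathring\varphi_{(x_j,u_j)}$, $\Theta_S=[\theta^S_{ij}]$; $G_{xx}=[\mathring\kappa(x_i,x_j)]$, $G_{xx^+}=[\mathring\kappa(x_i,x_j^+)]$, $G_{xu}=[\mathring\varkappa((x_i,u_i),(x_j,u_j))]$. $(g_1\times g_2)g_3=\langle g_2,g_3\rangle g_1$; $\|\cdot\|_{B_2}$ is the Hilbert–Schmidt norm. *)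

From HB Require Import structures.
From mathcomp Require Import all_boot all_order all_algebra.
From mathcomp Require Import all_classical all_reals ereal.
Set Implicit Arguments. Unset Strict Implicit. Unset Printing Implicit Defensive.
Import Order.TTheory GRing.Theory Num.Theory.
Local Open Scope ring_scope.
Local Open Scope classical_set_scope.

Definition inner_product (R : realType) (H : lmodType R) (ip : H -> H -> R) :=
  [/\ forall x y, ip x y = ip y x,
      forall (a : R) x y z, ip (a *: x + y) z = a * ip x z + ip y z,
      forall x, 0 <= ip x x
    & forall x, ip x x = 0 -> x = 0].

Definition self_adjoint (R : realType) (H : lmodType R) (ip : H -> H -> R)
  (T : {linear H -> H}) := forall g g', ip (T g) g' = ip g (T g').

Definition orthonormal (R : realType) (H : lmodType R) (ip : H -> H -> R)
  (m : nat) (e : 'I_m -> H) := forall i j, ip (e i) (e j) = (i == j)%:R.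

(* Hilbert--Schmidt norm: sup over finite orthonormal families of
   sqrt (sum_k |T e_k|^2); equals the usual HS norm (+oo if not HS). *)
Definition hs_norm (R : realType) (H : lmodType R) (ip : H -> H -> R)
  (T : H -> H) : \bar R :=
  ereal_sup [set r | exists m (e : 'I_m -> H), orthonormal ip e /\
     r = (Num.sqrt (\sum_(k < m) ip (T (e k)) (T (e k))))%:E].

Definition hilbert_schmidt (R : realType) (H : lmodType R) (ip : H -> H -> R)
  (T : H -> H) := (hs_norm ip T < +oo)%E.

Definition outer (R : realType) (H : lmodType R) (ip : H -> H -> R)
  (g1 g2 : H) : H -> H := fun g3 => ip g2 g3 *: g1.

Definition dotv (R : realType) (d : nat) (x y : 'rV[R]_d) : R :=
  \sum_(i < d) x 0 i * y 0 i.
Definition enorm (R : realType) (d : nat) (x : 'rV[R]_d) : R :=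
  Num.sqrt (dotv x x).

Definition kappa (R : realType) (rho : R -> R) (dx : nat) (x x' : 'rV[R]_dx) : R :=
  dotv x x' * rho (enorm (x - x')).
Definition varkappa (R : realType) (rho : R -> R) (dx du : nat)
  (x : 'rV[R]_dx) (u : 'rV[R]_du) (x' : 'rV[R]_dx) (u' : 'rV[R]_du) : R :=
  (dotv x x' + dotv u u') * rho (enorm (row_mx x u - row_mx x' u')).

From Pilot Require Import Defs.
From HB Require Import structures.
From mathcomp Require Import all_boot all_order all_algebra.
From mathcomp Require Import all_classical all_reals ereal.
From mathcomp Require Import ring lra.
Import Order.TTheory GRing.Theory Num.Theory.
Set Implicit Arguments. Unset Strict Implicit. Unset Printing Implicit Defensive.
Local Open Scope ring_scope.
Local Open Scope classical_set_scope.

(** At a data point [(x_i, u_i)], with feature [a := varphi x_i u_i], the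
    reproducing property turns [vhat (f x_i u_i)], [vhat x_i] and
    [<a, Shat a>] into the diagonal entries of the three congruent Gram
    matrices, so [w (x_i, u_i)] is the (nonpositive) diagonal LMI entry minus
    [<a, (S - Shat) a>].  By Cauchy--Schwarz and since the operator norm is
    dominated by the Hilbert--Schmidt norm, that error term is at most
    [epsS |a|^2 = epsS rho(0) |(x_i, u_i)|^2]. *)

Lemma trmx_mulmx_diag (R : comPzRingType) n (A T : 'M[R]_n) l :
  (A^T *m T *m A) l l = \sum_(i < n) \sum_(j < n) A i l * T i j * A j l.
Proof.
rewrite mxE; under eq_bigr do rewrite mxE big_distrl.
by rewrite exchange_big; apply: eq_bigr => i _; apply: eq_bigr => j _; rewrite !mxE.
Qed.

Section InnerProductSpace.
Variables (R : realType) (H : lmodType R) (ip : H -> H -> R).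
Hypothesis ip_inner : inner_product ip.

Lemma ipC x y : ip x y = ip y x. Proof. by case: ip_inner. Qed.

Lemma ipDZl a x y z : ip (a *: x + y) z = a * ip x z + ip y z.
Proof. by case: ip_inner. Qed.

Lemma ip_ge0 x : 0 <= ip x x. Proof. by case: ip_inner. Qed.

Lemma ip_eq0 x : ip x x = 0 -> x = 0. Proof. by case: ip_inner => _ _ _; apply. Qed.

Lemma ip0l z : ip 0 z = 0.
Proof. by have := ipDZl (-1) 0 0 z; rewrite scaleN1r addNr mulN1r addNr. Qed.

Lemma ip0r z : ip z 0 = 0. Proof. by rewrite ipC ip0l. Qed.

Lemma ipZl a x z : ip (a *: x) z = a * ip x z.
Proof. by have := ipDZl a x 0 z; rewrite addr0 ip0l addr0. Qed.

Lemma ipZr z a x : ip z (a *: x) = a * ip z x.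
Proof. by rewrite ipC ipZl ipC. Qed.

Lemma ipDr z x y : ip z (x + y) = ip z x + ip z y.
Proof. by rewrite !(ipC z) -[x]scale1r ipDZl scale1r mul1r. Qed.

Lemma ip_gt0 x : x != 0 -> 0 < ip x x.
Proof. by move=> x_neq0; rewrite lt_def ip_ge0 (contra_neq (@ip_eq0 x)). Qed.

Lemma ip_sqr_le x y : ip x y ^+ 2 <= ip x x * ip y y.
Proof.
have [->|/ip_gt0 yy_gt0] := eqVneq y 0; first by rewrite !ip0r expr0n mulr0.
set t := ip x y / ip y y.
have := ip_ge0 ((- t) *: y + x).
rewrite ipDZl (ipC y) (ipC x) !ipDZl (ipC y x).
have -> : - t * (- t * ip y y + ip x y) + (- t * ip x y + ip x x)
          = ip x x - ip x y ^+ 2 / ip y y by rewrite /t; field; exact: lt0r_neq0.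
by rewrite subr_ge0 ler_pdivrMr // mulrC.
Qed.

Definition ip_norm x := Num.sqrt (ip x x).

Lemma ip_norm_ge0 x : 0 <= ip_norm x. Proof. exact: sqrtr_ge0. Qed.

Lemma sqr_ip_norm x : ip_norm x ^+ 2 = ip x x.
Proof. by rewrite sqr_sqrtr ?ip_ge0. Qed.

Lemma ip_normZ a x : ip_norm (a *: x) = `|a| * ip_norm x.
Proof. by rewrite /ip_norm ipZl ipZr mulrA -expr2 sqrtrM ?sqr_ge0 // sqrtr_sqr. Qed.

Lemma ip_norm_gt0 x : x != 0 -> 0 < ip_norm x.
Proof. by move=> /ip_gt0; rewrite sqrtr_gt0. Qed.

Lemma ip_cauchy_schwarz x y : `|ip x y| <= ip_norm x * ip_norm y.
Proof.
rewrite /ip_norm -sqrtrM ?ip_ge0 // -sqrtr_sqr.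
by apply: ler_wsqrtr; apply: ip_sqr_le.
Qed.

Lemma orthonormal_normalized x :
  x != 0 -> Defs.orthonormal ip (fun _ : 'I_1 => (ip_norm x)^-1 *: x).
Proof.
move=> /ip_norm_gt0 x_gt0 i j; rewrite !ord1 eqxx ipZl ipZr -sqr_ip_norm.
by rewrite /=; field; exact: lt0r_neq0.
Qed.

Lemma ip_norm_le_hs_norm (T : H -> H) (e : R) x :
  scalable T -> (hs_norm ip T <= e%:E)%E -> ip_norm (T x) <= e * ip_norm x.
Proof.
move=> T_scalable hsT.
have [->|x_neq0] := eqVneq x 0.
  have -> : T 0 = 0 by rewrite -(scale0r (0 : H)) T_scalable !scale0r.
  by rewrite /ip_norm ip0l sqrtr0 mulr0.
have x_gt0 := ip_norm_gt0 x_neq0.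
have : ((Num.sqrt (\sum_(k < 1)
          ip (T ((ip_norm x)^-1 *: x)) (T ((ip_norm x)^-1 *: x))))%:E
        <= hs_norm ip T)%E.
  apply: ereal_sup_ubound; exists 1%N, (fun=> (ip_norm x)^-1 *: x).
  by split; first exact: orthonormal_normalized.
move=> /le_trans /(_ hsT); rewrite lee_fin big_ord1 T_scalable -/(ip_norm _).
by rewrite ip_normZ ger0_norm ?invr_ge0 ?ip_norm_ge0 // mulrC ler_pdivrMr.
Qed.

Definition outer_sum n (T : 'M[R]_n) (b : 'I_n -> H) (g : H) : H :=
  \sum_(i < n) \sum_(j < n) T i j *: outer ip (b i) (b j) g.

Lemma outer_sum_scalable n (T : 'M[R]_n) (b : 'I_n -> H) :
  scalable (outer_sum T b).
Proof.
move=> c g; rewrite /outer_sum scaler_sumr; apply: eq_bigr => i _.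
rewrite scaler_sumr; apply: eq_bigr => j _.
by rewrite /outer ipZr !scalerA mulrCA.
Qed.

Lemma ip_outer_sum n (T : 'M[R]_n) (b : 'I_n -> H) a g :
  ip a (outer_sum T b g)
  = \sum_(i < n) \sum_(j < n) T i j * (ip a (b i) * ip (b j) g).
Proof.
rewrite /outer_sum (big_morph (ip a) (ipDr a) (ip0r a)); apply: eq_bigr => i _.
rewrite (big_morph (ip a) (ipDr a) (ip0r a)); apply: eq_bigr => j _.
by rewrite /outer !ipZr (mulrC (ip (b j) g)).
Qed.
Lemma outer_sum_gram n (T G : 'M[R]_n) (b : 'I_n -> H) a l :
  (forall i, ip (b i) a = G i l) -> ip a (outer_sum T b a) = (G^T *m T *m G) l l.
Proof.
move=> gram; rewrite ip_outer_sum trmx_mulmx_diag.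
apply: eq_bigr => i _; apply: eq_bigr => j _.
by rewrite (ipC a) !gram mulrA (mulrC (T i j)).
Qed.
End InnerProductSpace.

Lemma dotv_ge0 (R : realType) d (x : 'rV[R]_d) : 0 <= dotv x x.
Proof. by apply: sumr_ge0 => i _; rewrite -expr2 sqr_ge0. Qed.

Lemma dotv_row_mx (R : realType) m k (x : 'rV[R]_m) (u : 'rV[R]_k) :
  dotv (row_mx x u) (row_mx x u) = dotv x x + dotv u u.
Proof.
by rewrite /dotv big_split_ord; congr (_ + _); apply: eq_bigr => i _;
  rewrite ?row_mxEl ?row_mxEr.
Qed.

Lemma enorm0 (R : realType) d : enorm (0 : 'rV[R]_d) = 0.
Proof. by rewrite /enorm /dotv big1 ?sqrtr0 // => i _; rewrite mxE mul0r. Qed.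

Lemma varkappa_diag (R : realType) (rho : R -> R) dx du
    (x : 'rV[R]_dx) (u : 'rV[R]_du) :
  varkappa rho x u x u = enorm (row_mx x u) ^+ 2 * rho 0.
Proof.
by rewrite /varkappa subrr enorm0 /enorm sqr_sqrtr ?dotv_ge0 // dotv_row_mx.
Qed.

Theorem corollary4
  (R : realType) (dx du dy : nat)
  (X : set 'rV[R]_dx) (U : set 'rV[R]_du)
  (f : 'rV[R]_dx -> 'rV[R]_du -> 'rV[R]_dx)
  (h : 'rV[R]_dx -> 'rV[R]_du -> 'rV[R]_dy)
  (s : 'rV[R]_dy -> 'rV[R]_du -> R)
  (rho : R -> R)
  (H1 : lmodType R) (ip1 : H1 -> H1 -> R) (phi : 'rV[R]_dx -> H1)
  (H2 : lmodType R) (ip2 : H2 -> H2 -> R) (varphi : 'rV[R]_dx -> 'rV[R]_du -> H2)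
  (S : {linear H2 -> H2})
  (n : nat) (xs : 'I_n -> 'rV[R]_dx) (us : 'I_n -> 'rV[R]_du)
  (xps : 'I_n -> 'rV[R]_dx)
  (ThetaS ThetaP : 'M[R]_n) (epsS : R) :
  (* standing assumptions *)
  X 0 -> U 0 ->
  (forall x u, X x -> U u -> X (f x u)) ->
  f 0 0 = 0 -> h 0 0 = 0 ->
  (forall r, 0 <= r -> 0 <= rho r) ->
  (* RKHS of kappa on X and of varkappa on X x U, with canonical features *)
  inner_product ip1 ->
  (forall x x', X x -> X x' -> ip1 (phi x) (phi x') = kappa rho x x') ->
  inner_product ip2 ->
  (forall x u x' u', X x -> U u -> X x' -> U u' ->
     ip2 (varphi x u) (varphi x' u') = varkappa rho x u x' u') ->
  (* S self-adjoint representing s *)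
  self_adjoint ip2 S ->
  (forall x u, X x -> U u -> s (h x u) u = ip2 (varphi x u) (S (varphi x u))) ->
  (* data *)
  (forall i, X (xs i)) -> (forall i, U (us i)) ->
  (forall i, xps i = f (xs i) (us i)) ->
  (* S Hilbert--Schmidt, ||S - Shat||_B2 <= epsS *)
  let Shat : H2 -> H2 := fun g =>
    \sum_(i < n) \sum_(j < n)
      ThetaS i j *: outer ip2 (varphi (xs i) (us i)) (varphi (xs j) (us j)) g in
  hilbert_schmidt ip2 S ->
  (hs_norm ip2 (fun g => (S g - Shat g)%R) <= epsS%:E)%E ->
  (* Gram matrices and LMI-type diagonal condition on ThetaP *)
  let Gxx : 'M[R]_n := \matrix_(i, j) kappa rho (xs i) (xs j) in
  let Gxxp : 'M[R]_n := \matrix_(i, j) kappa rho (xs i) (xps j) in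
  let Gxu : 'M[R]_n :=
    \matrix_(i, j) varkappa rho (xs i) (us i) (xs j) (us j) in
  (forall i, (Gxxp^T *m ThetaP *m Gxxp - Gxx^T *m ThetaP *m Gxx
              - Gxu^T *m ThetaS *m Gxu) i i <= 0) ->
  let Phat : H1 -> H1 := fun g =>
    \sum_(i < n) \sum_(j < n) ThetaP i j *: outer ip1 (phi (xs i)) (phi (xs j)) g in
  let vhat : 'rV[R]_dx -> R := fun x => ip1 (phi x) (Phat (phi x)) in
  let w : 'rV[R]_dx -> 'rV[R]_du -> R :=
    fun x u => vhat (f x u) - vhat x - s (h x u) u in
  forall i, enorm (row_mx (xs i) (us i)) != 0 ->
    w (xs i) (us i) / enorm (row_mx (xs i) (us i)) ^+ 2 <= epsS * rho 0.
Proof.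
move=> _ _ fX _ _ _ ip1_inner phi_gram ip2_inner varphi_gram _ s_quad xsX usU
  xps_next Shat _ S_Shat_hs Gxx Gxxp Gxu diag_le0 Phat vhat w l z_neq0.
set z := row_mx (xs l) (us l); set a := varphi (xs l) (us l).
have Phat_def : Phat = outer_sum ip1 ThetaP (fun i => phi (xs i)) by [].
have Shat_def : Shat = outer_sum ip2 ThetaS (fun i => varphi (xs i) (us i)) by [].
pose E g := S g - Shat g.
have vhat_next : vhat (f (xs l) (us l)) = (Gxxp^T *m ThetaP *m Gxxp) l l.
  rewrite /vhat Phat_def; apply: (outer_sum_gram ip1_inner) => i.
  by rewrite mxE xps_next phi_gram //; apply: fX.
have vhat_cur : vhat (xs l) = (Gxx^T *m ThetaP *m Gxx) l l.
  rewrite /vhat Phat_def; apply: (outer_sum_gram ip1_inner) => i.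
  by rewrite mxE phi_gram.
have s_split : s (h (xs l) (us l)) (us l)
               = (Gxu^T *m ThetaS *m Gxu) l l + ip2 a (E a).
  rewrite s_quad // -/a -[S a](subrK (Shat a)) addrC (ipDr ip2_inner) Shat_def.
  congr (_ + _); apply: (outer_sum_gram ip2_inner) => i.
  by rewrite mxE varphi_gram.
have E_bound : - ip2 a (E a) <= epsS * (enorm z ^+ 2 * rho 0).
  have E_scalable : scalable E.
    by move=> c g; rewrite /E linearZ Shat_def (outer_sum_scalable ip2_inner) scalerBr.
  rewrite -varkappa_diag -varphi_gram // -(sqr_ip_norm ip2_inner) expr2 mulrCA.
  apply: ler_normlW; rewrite normrN (le_trans (ip_cauchy_schwarz ip2_inner _ _)) //.
  by rewrite ler_wpM2l ?ip_norm_ge0 // ip_norm_le_hs_norm.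
have z_sqr_gt0 : 0 < enorm z ^+ 2 by rewrite exprn_gt0 // lt_def z_neq0 sqrtr_ge0.
rewrite ler_pdivrMr // /w vhat_next vhat_cur s_split -mulrA.
by move: (diag_le0 l) E_bound; rewrite !mxE; lra.
Qed.
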